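(* Let $V$ be an irreducible cuspidal $\mathcal G$-module. Then either $t^{\mathbf r}$ acts injectively on $V$ for every $\mathbf r\in\mathbb Z^n\setminus\{\mathbf 0\}$, or $t^{\mathbf r}$ acts locally nilpotently on $V$ for every $\mathbf r\in\mathbb Z^n\setminus\{\mathbf 0\}$.
   Context: $n\ge 3$. $\mathcal A_n=\mathbb C[t_1^{\pm1},\dots,t_n^{\pm1}]$, $t^{\mathbf m}=t_1^{m_1}\cdots t_n^{m_n}$, $d_j=t_j\frac{\partial}{\partial t_j}$, $(\mathbf u|\mathbf v)=\sum_iu_iv_i$, $D(\mathbf u,\mathbf r)=\sum_iu_it^{\mathbf r}d_i$. $\mathcal D_n=\mathrm{span}\{D(\mathbf u,\mathbf r):(\mathbf u|\mathbf r)=0\}$ with $[D(\mathbf p,\mathbf m),D(\mathbf q,\mathbf k)]=D((\mathbf p|\mathbf k)\mathbf q-(\mathbf q|\mathbf m)\mathbf p,\mathbf m+\mathbf k)$; $\mathcal G=\mathcal D_n\ltimes\mathcal A_n$ with $[D(\mathbf u,\mathbf r),t^{\mathbf m}]=(\mathbf u|\mathbf m)t^{\mathbf r+\mathbf m}$, $[t^{\mathbf r},t^{\mathbf m}]=0$. $\mathcal H=\mathrm{span}\{d_j\}$; a cuspidal module is a weight module for $\mathcal H$ whose weight spaces have uniformly bounded finite dimension. *)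

From HB Require Import structures.
From mathcomp Require Import all_boot all_order all_algebra.
From mathcomp Require Import complex Rstruct.
Set Implicit Arguments. Unset Strict Implicit. Unset Printing Implicit Defensive.
Import Order.TTheory GRing.Theory Num.Theory.
Local Open Scope ring_scope.

Definition C : numClosedFieldType := (Rdefinitions.R)[i].

Definition zvec (n : nat) := {ffun 'I_n -> int}.
Definition cvec (n : nat) := {ffun 'I_n -> C}.

Definition pairing (n : nat) (u : cvec n) (r : zvec n) : C :=
  \sum_(i < n) u i * (r i)%:~R.

Definition evec (n : nat) (j : 'I_n) : cvec n := [ffun i => if i == j then 1 else 0].

(* A representation of G = D_n ⋉ A_n on a complex vector space V is given by
   operators rhoD u r  (image of D(u,r), meaningful for (u|r) = 0)
   and rhoA m (image of t^m), subject to linearity and the bracket relations. *)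
Definition is_Gmodule (n : nat) (V : lmodType C)
    (rhoD : cvec n -> zvec n -> V -> V) (rhoA : zvec n -> V -> V) : Prop :=
  (forall u r (a : C) (v w : V), rhoD u r (a *: v + w) = a *: rhoD u r v + rhoD u r w) /\
  (forall m (a : C) (v w : V), rhoA m (a *: v + w) = a *: rhoA m v + rhoA m w) /\
  (forall r (a : C) u1 u2 (v : V), pairing u1 r = 0 -> pairing u2 r = 0 ->
      rhoD (a *: u1 + u2) r v = a *: rhoD u1 r v + rhoD u2 r v) /\
  (forall p m q k (v : V), pairing p m = 0 -> pairing q k = 0 ->
      rhoD p m (rhoD q k v) - rhoD q k (rhoD p m v)
      = rhoD (pairing p k *: q - pairing q m *: p) (m + k) v) /\
  (forall u r m (v : V), pairing u r = 0 ->
      rhoD u r (rhoA m v) - rhoA m (rhoD u r v) = pairing u m *: rhoA (r + m) v) /\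
  (forall r m (v : V), rhoA r (rhoA m v) = rhoA m (rhoA r v)).

Definition dop (n : nat) (V : lmodType C) (rhoD : cvec n -> zvec n -> V -> V)
  (j : 'I_n) : V -> V := rhoD (evec j) 0.

Definition weight_space (n : nat) (V : lmodType C) (rhoD : cvec n -> zvec n -> V -> V)
  (lam : cvec n) (v : V) : Prop := forall j : 'I_n, dop rhoD j v = lam j *: v.

(* V is the (direct) sum of its weight spaces: every vector is a finite
   sum of weight vectors (sums of weight spaces for distinct weights are automatically direct). *)
Definition is_weight_module (n : nat) (V : lmodType C)
    (rhoD : cvec n -> zvec n -> V -> V) : Prop :=
  forall v : V, exists (k : nat) (lam : 'I_k -> cvec n) (w : 'I_k -> V),
    (forall i, weight_space rhoD (lam i) (w i)) /\ v = \sum_(i < k) w i.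

Definition lin_indep (V : lmodType C) (k : nat) (w : 'I_k -> V) : Prop :=
  forall c : 'I_k -> C, \sum_(i < k) c i *: w i = 0 -> forall i, c i = 0.

Definition dim_le (n : nat) (V : lmodType C) (rhoD : cvec n -> zvec n -> V -> V)
    (lam : cvec n) (N : nat) : Prop :=
  forall (k : nat) (w : 'I_k -> V),
    (forall i, weight_space rhoD lam (w i)) -> lin_indep w -> (k <= N)%N.

Definition is_cuspidal (n : nat) (V : lmodType C)
    (rhoD : cvec n -> zvec n -> V -> V) : Prop :=
  is_weight_module rhoD /\ exists N : nat, forall lam : cvec n, dim_le rhoD lam N.

Definition is_submodule (n : nat) (V : lmodType C)
    (rhoD : cvec n -> zvec n -> V -> V) (rhoA : zvec n -> V -> V) (W : V -> Prop) : Prop :=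
  W 0 /\ (forall (a : C) v w, W v -> W w -> W (a *: v + w)) /\
  (forall u r v, pairing u r = 0 -> W v -> W (rhoD u r v)) /\
  (forall m v, W v -> W (rhoA m v)).

Definition is_irreducible (n : nat) (V : lmodType C)
    (rhoD : cvec n -> zvec n -> V -> V) (rhoA : zvec n -> V -> V) : Prop :=
  (exists v : V, v != 0) /\
  forall W : V -> Prop, is_submodule rhoD rhoA W ->
    (forall v, W v -> v = 0) \/ (forall v, W v).

Definition locally_nilpotent (V : lmodType C) (f : V -> V) : Prop :=
  forall v : V, exists k : nat, iter k f v = 0.

From mathcomp Require Import all_boot all_order all_algebra.
From mathcomp Require Import complex Rstruct.
From mathcomp Require Import ring zify.
From Stdlib Require Import Classical.
Import GRing.Theory Num.Theory.
Set Implicit Arguments. Unset Strict Implicit. Unset Printing Implicit Defensive.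
Local Open Scope ring_scope.

(* For each r the generalized kernel of t^r is a submodule, so by
   irreducibility t^r is injective or locally nilpotent.  If both behaviours
   occur for nonzero exponents, they occur for non-parallel r and s, with t^r
   locally nilpotent and t^s injective.  For (u|m) = 0 one has
   [D(u,m), t^r] = (u|r) t^(m+r); so if (u|r) <> 0, t^(m+r) is injective and
   z <> 0 is killed by t^r, then t^r kills D(u,m)^a z exactly after a + 1
   steps, since (t^r)^a D(u,m)^a z = (-1)^a a! (u|r)^a t^(a(m+r)) z <> 0.
   Moving these vectors, for a = 0 .. N, into a single weight space by
   injective operators commuting with t^r yields N + 1 independent weight
   vectors of one weight, against the bound N on weight multiplicities. *)

Lemma iter_commute (T : Type) (f g : T -> T) k x :
  (forall y, f (g y) = g (f y)) -> iter k f (g x) = g (iter k f x).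
Proof. by move=> fg; elim: k => //= k ->; rewrite fg. Qed.

Lemma iter_injective (T : Type) (f : T -> T) k :
  injective f -> injective (iter k f).
Proof. by move=> f_inj; elim: k => //= k IH x y /f_inj /IH. Qed.

Section LinearOperators.
Variable V : lmodType C.
Implicit Types (f T : V -> V) (v w : V).

Lemma linear_fun0 f : linear f -> f 0 = 0.
Proof.
move=> f_lin; have := f_lin 1 0 0; rewrite !scale1r addr0 => f0.
by apply: (addrI (f 0)); rewrite addr0 -f0.
Qed.

Lemma linear_funZ f a v : linear f -> f (a *: v) = a *: f v.
Proof. by move=> f_lin; rewrite -[a *: v]addr0 f_lin linear_fun0 ?addr0. Qed.

Lemma linear_funD f v w : linear f -> f (v + w) = f v + f w.
Proof. by move=> f_lin; rewrite -[v]scale1r f_lin !scale1r. Qed.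

Lemma linear_funB f v w : linear f -> f (v - w) = f v - f w.
Proof.
by move=> f_lin; rewrite linear_funD // -scaleN1r linear_funZ // scaleN1r.
Qed.

Lemma linear_fun_sum f k (c : 'I_k -> C) (w : 'I_k -> V) : linear f ->
  f (\sum_(j < k) c j *: w j) = \sum_(j < k) c j *: f (w j).
Proof.
move=> f_lin; apply: (big_ind2 (fun a b => f a = b)); first exact: linear_fun0.
  by move=> ? ? ? ? <- <-; rewrite linear_funD.
by move=> j _; rewrite linear_funZ.
Qed.

Lemma linear_iter f k : linear f -> linear (iter k f).
Proof. by move=> f_lin; elim: k => [|k IH] a v w //=; rewrite IH f_lin. Qed.

Lemma linear_scale_fun (c : C) f : linear f -> linear (fun v => c *: f v).
Proof. by move=> f_lin a v w; rewrite f_lin scalerDr !scalerA mulrC. Qed.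

Lemma iter_linear_fun0 f k : linear f -> iter k f 0 = 0.
Proof. by move=> f_lin; elim: k => //= k ->; rewrite linear_fun0. Qed.

Lemma iter_linear_fun_eq0 f k m v : linear f -> (k <= m)%N ->
  iter k f v = 0 -> iter m f v = 0.
Proof.
by move=> f_lin km fv0; rewrite -(subnK km) iterD fv0 iter_linear_fun0.
Qed.

Lemma injective_fun_neq0 f v : linear f -> injective f -> v != 0 -> f v != 0.
Proof.
move=> f_lin f_inj; apply: contra => /eqP fv0; apply/eqP/f_inj.
by rewrite fv0 linear_fun0.
Qed.

Lemma last_nonzero_iterate f k v : v != 0 -> iter k f v = 0 ->
  exists j, iter j f v != 0 /\ f (iter j f v) = 0.
Proof.
move=> v_nz; elim: k => [|k IH] /=; first by move=> v0; rewrite v0 eqxx in v_nz.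
by have [/IH|] := eqVneq (iter k f v) 0; [|exists k].
Qed.

(* Vectors whose T-nilpotency orders are 1, 2, ..., N+1 are independent:
   T^N kills all but the last one. *)
Lemma lin_indep_nilpotency_orders T N (x : nat -> V) : linear T ->
  (forall i, (i <= N)%N -> iter i.+1 T (x i) = 0 /\ iter i T (x i) != 0) ->
  lin_indep (fun i : 'I_N.+1 => x i).
Proof.
move=> T_lin; elim: N => [|N IH] x_ord c sum0 i.
  have [_] := x_ord 0%N (leqnn 0); move: sum0; rewrite big_ord1 /= (ord1 i).
  by move/eqP; rewrite scaler_eq0 => /orP[/eqP|/eqP ->]; rewrite ?eqxx.
have [xN0 xN_nz] := x_ord N.+1 (leqnn _).
have cN0 : c ord_max = 0.
  move/(congr1 (iter N.+1 T)): sum0.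
  rewrite linear_fun_sum; last exact: linear_iter.
  rewrite iter_linear_fun0 // big_ord_recr big1 => [|j _].
    by rewrite /= add0r => /eqP; rewrite scaler_eq0 (negbTE xN_nz) orbF => /eqP.
  have [xj0 _] := x_ord j (leqW (ltn_ord j)).
  by rewrite (iter_linear_fun_eq0 _ (ltn_ord j) xj0) ?scaler0.
have IHc := IH (fun i ilt => x_ord i (leqW ilt))
  (fun j => c (widen_ord (leqnSn _) j)).
have [ilt|ige] := ltnP i N.+1.
  have -> : i = widen_ord (leqnSn _) (Ordinal ilt) by exact: val_inj.
  by apply: IHc; move: sum0; rewrite big_ord_recr /= cN0 scale0r addr0.
suff -> : i = ord_max by [].
by apply/val_inj/eqP; rewrite eqn_leq ige -ltnS ltn_ord.
Qed.

End LinearOperators.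

Section Commutator.
Variables (V : lmodType C) (T D B : V -> V).
Hypotheses (T_lin : linear T) (D_lin : linear D) (B_lin : linear B).
Hypothesis commDT : forall x, D (T x) - T (D x) = B x.
Hypothesis commBT : forall x, B (T x) = T (B x).

Let commTD x : T (D x) = D (T x) - B x.
Proof. by rewrite -commDT opprB addrC subrK. Qed.

Let commTB x : T (B x) = B (T x).
Proof. by rewrite commBT. Qed.

Lemma iter_commDT j x :
  iter j.+1 T (D x) = D (iter j.+1 T x) - j.+1%:R *: iter j T (B x).
Proof.
elim: j x => [|j IH] x; first by rewrite /= scale1r commTD.
rewrite iterS IH linear_funB // linear_funZ // commTD -iterS -addrA -opprD.
rewrite -!(iter_commute _ _ commTB) -iterS -{1}[iter _ T (B x)]scale1r.
by rewrite -scalerDl addrC -natr1.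
Qed.

Lemma iter_D_eq0 k x : iter k T x = 0 -> iter k.+1 T (D x) = 0.
Proof.
move=> Tx0; rewrite iter_commDT iterS Tx0 !linear_fun0 //.
by rewrite iter_commute // Tx0 linear_fun0 // scaler0 subr0.
Qed.

Lemma iter_iterD_eq0 a x : T x = 0 -> iter a.+1 T (iter a D x) = 0.
Proof. by move=> Tx0; elim: a => [|a IH] //; exact: iter_D_eq0 IH. Qed.

Lemma iter_iterD a x : T x = 0 ->
  iter a T (iter a D x) = ((-1) ^+ a * a`!%:R) *: iter a B x.
Proof.
move=> Tx0; elim: a => [|a IH]; first by rewrite /= mulr1 scale1r.
rewrite [iter a.+1 D x]iterS iter_commDT iter_iterD_eq0 // linear_fun0 // sub0r.
rewrite (iter_commute _ _ commTB) IH (linear_funZ _ _ B_lin) scalerA -scaleNr.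
by rewrite iterS factS natrM exprS; congr (_ *: _); ring.
Qed.

Lemma iter_iterD_neq0 a x : injective B -> T x = 0 -> x != 0 ->
  iter a T (iter a D x) != 0.
Proof.
move=> B_inj Tx0 x_nz; rewrite iter_iterD // scaler_eq0 negb_or mulf_eq0.
rewrite negb_or signr_eq0 pnatr_eq0 -lt0n fact_gt0 /=.
by elim: a => //= a IH; apply: injective_fun_neq0.
Qed.

Lemma lin_indep_ladder (P : nat -> V -> V) (w : nat -> V) N :
  injective B -> (forall a, linear (P a)) -> (forall a, injective (P a)) ->
  (forall a y, T (P a y) = P a (T y)) ->
  (forall a, T (w a) = 0) -> (forall a, w a != 0) ->
  lin_indep (fun a : 'I_N.+1 => P a (iter a D (w a))).
Proof.
move=> B_inj P_lin P_inj commTP Tw0 w_nz.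
apply: (lin_indep_nilpotency_orders (x := fun a => P a (iter a D (w a))) T_lin).
move=> a _; rewrite !(iter_commute _ _ (commTP a)); split.
  by rewrite iter_iterD_eq0 // linear_fun0.
exact: injective_fun_neq0 (iter_iterD_neq0 _ B_inj (Tw0 a) (w_nz a)).
Qed.

End Commutator.

Section Pairing.
Variable n : nat.
Implicit Types (u : cvec n) (r s : zvec n).

Lemma pairingD u1 u2 r : pairing (u1 + u2) r = pairing u1 r + pairing u2 r.
Proof.
by rewrite /pairing -big_split; apply: eq_bigr => i _; rewrite ffunE mulrDl.
Qed.

Lemma pairingZ (c : C) u r : pairing (c *: u) r = c * pairing u r.
Proof.
by rewrite /pairing mulr_sumr; apply: eq_bigr => i _; rewrite ffunE mulrA.
Qed.

Lemma pairing_evec j r : pairing (evec j) r = (r j)%:~R.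
Proof.
rewrite /pairing (bigD1 j) //= big1 ?addr0 => [|i /negbTE ij]; rewrite ffunE.
  by rewrite eqxx mul1r.
by rewrite ij mul0r.
Qed.

Lemma pairingr0 u : pairing u 0 = 0.
Proof. by rewrite /pairing big1 // => i _; rewrite ffunE mulr0. Qed.

Lemma pairing0r r : pairing 0 r = 0.
Proof. by rewrite /pairing big1 // => i _; rewrite ffunE mul0r. Qed.

Definition nonparallel r s := exists i j, r i * s j - r j * s i != 0.

Lemma nonparallel_sym r s : nonparallel r s -> nonparallel s r.
Proof.
move=> [i [j minor_nz]]; exists i, j; rewrite -oppr_eq0.
by congr (~~ (_ == 0)): minor_nz; ring.
Qed.

Lemma nonparallel_subl r s : nonparallel r s -> nonparallel (r - s) s.
Proof.
move=> [i [j minor_nz]]; exists i, j; rewrite !ffunE.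
by congr (~~ (_ == 0)): minor_nz; ring.
Qed.

Lemma nonparallel_separating r s : nonparallel r s ->
  exists u, pairing u r = 0 /\ pairing u s != 0.
Proof.
move=> [i [j minor_nz]]; exists ((r j)%:~R *: evec i - (r i)%:~R *: evec j).
rewrite !pairingD -!scaleNr !pairingZ !pairing_evec; split; first by ring.
rewrite -oppr_eq0 -(intr_eq0 C) rmorphN rmorphB !rmorphM /= in minor_nz.
by congr (~~ (_ == 0)): minor_nz; ring.
Qed.

(* If [p0] and [q0] are parallel, a coordinate vector [e_j] is parallel to
   neither, and satisfies [P] or [Q]. *)
Lemma nonparallel_pair (P Q : zvec n -> Prop) p0 q0 : (1 < n)%N ->
  (forall x, P x \/ Q x) -> p0 != 0 -> q0 != 0 -> P p0 -> Q q0 ->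
  exists p q, P p /\ Q q /\ nonparallel p q.
Proof.
move=> n_gt1 PQ p0_nz q0_nz Pp0 Qq0.
case: (classic (nonparallel p0 q0)) => [|par]; first by exists p0, q0.
have minor0 k l : p0 k * q0 l - p0 l * q0 k = 0.
  by apply/eqP; apply: contraT => minor_nz; case: par; exists k, l.
have [i qi_nz] : exists i, q0 i != 0.
  apply/existsP; apply: contraR q0_nz => /existsPn q0_0.
  by apply/eqP/ffunP => k; rewrite ffunE; apply/eqP/negPn/q0_0.
have pi_nz : p0 i != 0.
  apply: contraNneq p0_nz => pi0; apply/eqP/ffunP => k; rewrite ffunE.
  move/eqP: (minor0 k i).
  by rewrite pi0 mul0r subr0 mulf_eq0 (negbTE qi_nz) orbF => /eqP.
pose j : 'I_n := if val i == 0%N then Ordinal n_gt1 else Ordinal (ltnW n_gt1).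
have ij : (i == j) = false.
  by rewrite /j -val_eqE; case: ifPn => [/eqP -> | /negbTE].
pose x : zvec n := [ffun k => (k == j)%:R].
have x_nonpar (t : zvec n) : t i != 0 -> nonparallel x t.
  by move=> ti_nz; exists j, i; rewrite !ffunE eqxx ij mul1r mul0r subr0.
have [Px|Qx] := PQ x; first by exists x, q0; split; [|split; [|exact: x_nonpar]].
by exists p0, x; split; [|split; [|apply/nonparallel_sym/x_nonpar]].
Qed.

End Pairing.

Definition zvecC n (m : zvec n) : cvec n := [ffun i => (m i)%:~R].

Lemma zvecC0 n : zvecC (0 : zvec n) = 0.
Proof. by apply/ffunP => i; rewrite !ffunE. Qed.

Lemma zvecCD n (m1 m2 : zvec n) : zvecC (m1 + m2) = zvecC m1 + zvecC m2.
Proof. by apply/ffunP => i; rewrite !ffunE rmorphD. Qed.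

Lemma dim_le_lin_indep n (V : lmodType C) (rhoD : cvec n -> zvec n -> V -> V)
    lam N (x : 'I_N.+1 -> V) :
  dim_le rhoD lam N -> (forall i, weight_space rhoD lam (x i)) -> ~ lin_indep x.
Proof. by move=> dimN wx /(dimN _ _ wx); rewrite ltnn. Qed.

Lemma exists_weight_vector n (V : lmodType C)
    (rhoD : cvec n -> zvec n -> V -> V) :
  (exists v : V, v != 0) -> is_weight_module rhoD ->
  exists lam x, weight_space rhoD lam x /\ x != 0.
Proof.
move=> [v v_nz] /(_ v) [k [lam [w [wv v_sum]]]].
have [i wi_nz|w0] := pickP (fun i => w i != 0); first by exists (lam i), (w i).
by move: v_nz; rewrite v_sum big1 ?eqxx // => i _; apply/eqP/negbFE/w0.
Qed.

Section GModule.
Variables (n : nat) (V : lmodType C).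
Variables (rhoD : cvec n -> zvec n -> V -> V) (rhoA : zvec n -> V -> V).
Hypothesis G_mod : is_Gmodule rhoD rhoA.

Lemma rhoD_linear u r : linear (rhoD u r).
Proof. by case: G_mod => D_lin _ a v w; rewrite D_lin. Qed.

Lemma rhoA_linear m : linear (rhoA m).
Proof. by case: G_mod => _ [A_lin _] a v w; rewrite A_lin. Qed.

Lemma rhoA_comm r m x : rhoA r (rhoA m x) = rhoA m (rhoA r x).
Proof. by case: G_mod => _ [_ [_ [_ [_ AA]]]]. Qed.

Lemma rhoDA_comm u r m x : pairing u r = 0 ->
  rhoD u r (rhoA m x) - rhoA m (rhoD u r x) = pairing u m *: rhoA (r + m) x.
Proof. by case: G_mod => _ [_ [_ [_ [DA _]]]]; apply: DA. Qed.

Lemma rhoDD_comm p m q k x : pairing p m = 0 -> pairing q k = 0 ->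
  rhoD p m (rhoD q k x) - rhoD q k (rhoD p m x)
  = rhoD (pairing p k *: q - pairing q m *: p) (m + k) x.
Proof. by case: G_mod => _ [_ [_ [DD _]]]; apply: DD. Qed.

Lemma rhoDZ (c : C) u r x : pairing u r = 0 ->
  rhoD (c *: u) r x = c *: rhoD u r x.
Proof.
case: G_mod => _ [_ [D_linl _]] ur0.
have D0 : rhoD 0 r x = 0.
  have := D_linl r 1 0 0 x (pairing0r r) (pairing0r r).
  rewrite scaler0 addr0 scale1r => D0D.
  by apply: (addrI (rhoD 0 r x)); rewrite addr0 -D0D.
by have := D_linl r c u 0 x ur0 (pairing0r r); rewrite addr0 D0 addr0.
Qed.

Definition shifts_weight m (F : V -> V) := forall lam x,
  weight_space rhoD lam x -> weight_space rhoD (lam + zvecC m) (F x).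

Lemma shifts_weight_rhoA m : shifts_weight m (rhoA m).
Proof.
move=> lam x wx j; rewrite /dop.
move/eqP: (rhoDA_comm m x (pairingr0 (evec j))); rewrite subr_eq => /eqP ->.
rewrite add0r pairing_evec [rhoD _ _ x]wx (linear_funZ _ _ (rhoA_linear m)).
by rewrite !ffunE scalerDl addrC.
Qed.

Lemma shifts_weight_rhoD u m : pairing u m = 0 -> shifts_weight m (rhoD u m).
Proof.
move=> um0 lam x wx j; rewrite /dop.
move: (rhoDD_comm x (pairingr0 (evec j)) um0).
rewrite pairingr0 scale0r subr0 add0r pairing_evec rhoDZ // => /eqP.
rewrite subr_eq => /eqP ->.
rewrite [rhoD (evec j) 0 x]wx (linear_funZ _ _ (rhoD_linear u m)).
by rewrite !ffunE scalerDl addrC.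
Qed.

Lemma shifts_weight_iter m F k :
  shifts_weight m F -> shifts_weight (m *+ k) (iter k F).
Proof.
move=> F_shift; elim: k => [|k IH] lam x wx; first by rewrite zvecC0 addr0.
by rewrite mulrSr zvecCD addrA; apply/F_shift/IH.
Qed.

Section Ladder.
Variables (u : cvec n) (m r : zvec n).
Hypothesis um0 : pairing u m = 0.

Let B x := pairing u r *: rhoA (m + r) x.
Let T_lin := rhoA_linear r.
Let D_lin := rhoD_linear u m.

Let B_lin : linear B.
Proof. exact/linear_scale_fun/rhoA_linear. Qed.

Let commDT x : rhoD u m (rhoA r x) - rhoA r (rhoD u m x) = B x.
Proof. exact: rhoDA_comm. Qed.

Let commBT x : B (rhoA r x) = rhoA r (B x).
Proof. by rewrite /B (linear_funZ _ _ (rhoA_linear r)) rhoA_comm. Qed.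

Lemma iter_rhoA_rhoD_eq0 k x :
  iter k (rhoA r) x = 0 -> iter k.+1 (rhoA r) (rhoD u m x) = 0.
Proof. exact: (iter_D_eq0 T_lin D_lin B_lin commDT commBT). Qed.

Hypotheses (ur_nz : pairing u r != 0) (inj_mr : injective (rhoA (m + r))).

Let B_inj : injective B.
Proof. by move=> x y /(scalerI ur_nz) /inj_mr. Qed.

Lemma iter_rhoA_iter_rhoD_neq0 a x : rhoA r x = 0 -> x != 0 ->
  iter a (rhoA r) (iter a (rhoD u m) x) != 0.
Proof.
exact: (iter_iterD_neq0 T_lin D_lin B_lin commDT commBT a B_inj).
Qed.

Lemma lin_indep_rhoA_ladder (P : nat -> V -> V) (w : nat -> V) N :
  (forall a, linear (P a)) -> (forall a, injective (P a)) ->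
  (forall a y, rhoA r (P a y) = P a (rhoA r y)) ->
  (forall a, rhoA r (w a) = 0) -> (forall a, w a != 0) ->
  lin_indep (fun a : 'I_N.+1 => P a (iter a (rhoD u m) (w a))).
Proof.
exact: (lin_indep_ladder T_lin D_lin B_lin commDT commBT B_inj).
Qed.

End Ladder.

Lemma rhoA_injective_or_nilpotent r : is_irreducible rhoD rhoA ->
  injective (rhoA r) \/ locally_nilpotent (rhoA r).
Proof.
move=> [_ irr]; have r_lin := rhoA_linear r.
pose W v := exists k, iter k (rhoA r) v = 0.
have W_sub : is_submodule rhoD rhoA W.
  split; first by exists 0%N.
  split; first move=> a v w [k vk] [l wl].
    exists (k + l)%N; rewrite (linear_iter _ r_lin).
    rewrite (iter_linear_fun_eq0 r_lin (leq_addr _ _) vk).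
    by rewrite (iter_linear_fun_eq0 r_lin (leq_addl _ _) wl) scaler0 addr0.
  split; first by move=> u m v um0 [k vk]; exists k.+1; apply: iter_rhoA_rhoD_eq0.
  move=> m v [k vk]; exists k.
  by rewrite (iter_commute _ _ (rhoA_comm r m)) vk (linear_fun0 (rhoA_linear m)).
have [W0|WV] := irr W W_sub; [left|right] => [x y rxy|v]; last exact: WV.
apply/eqP; rewrite -subr_eq0; apply/eqP/W0.
by exists 1%N; rewrite /= (linear_funB _ _ r_lin) rxy subrr.
Qed.

Lemma exists_weight_vector_ker (K : V -> Prop) r lam x :
  (forall y, K y -> K (rhoA r y)) -> locally_nilpotent (rhoA r) ->
  weight_space rhoD lam x -> x != 0 -> K x ->
  exists lam' y, [/\ weight_space rhoD lam' y, y != 0, K y & rhoA r y = 0].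
Proof.
move=> K_stable nil_r wx x_nz Kx.
have [k rx0] := nil_r x; have [j [rjx_nz rjx0]] := last_nonzero_iterate x_nz rx0.
exists (lam + zvecC (r *+ j)), (iter j (rhoA r) x); split=> //.
  exact: (shifts_weight_iter _ (shifts_weight_rhoA r) wx).
by elim: j {rjx_nz rjx0} => //= j; apply: K_stable.
Qed.

Section NonparallelContradiction.
Variable N : nat.
Hypothesis dimN : forall lam, dim_le rhoD lam N.
Variables (lam0 : cvec n) (x0 : V).
Hypotheses (wx0 : weight_space rhoD lam0 x0) (x0_nz : x0 != 0).
Variables r s : zvec n.
Hypotheses (nil_r : locally_nilpotent (rhoA r)) (inj_s : injective (rhoA s)).
Hypothesis nonpar : nonparallel s r.

(* With [z] in the kernel of [t^r] and [(u|s - 2r) = 0 != (u|r)], the vectors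
   [t^((s-r)(2N-2a)) t^(sa) D(u, s-2r)^a z], [a <= N], share one weight. *)
Lemma injective_diff_contra : ~ injective (rhoA (s - r)).
Proof.
move=> inj_sr.
have [lam [z [wz z_nz _ rz0]]] :=
  exists_weight_vector_ker (K := fun _ => True) (fun _ _ => I) nil_r wx0 x0_nz I.
have [u [u_perp ur_nz]] :=
  nonparallel_separating (nonparallel_subl (nonparallel_subl nonpar)).
pose P a y := iter (N.*2 - a.*2) (rhoA (s - r)) (iter a (rhoA s) y).
apply: (dim_le_lin_indep
  (x := fun a : 'I_N.+1 => P a (iter a (rhoD u (s - r - r)) z))
  (@dimN (lam + zvecC ((s - r) *+ N.*2)))).
  move=> a; have -> : (s - r) *+ N.*2
      = (s - r - r) *+ a + (s *+ a + (s - r) *+ (N.*2 - a.*2)).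
    rewrite addrA -mulrnDl (_ : s - r - r + s = (s - r) *+ 2).
      by rewrite -mulrnA -mulrnDr; congr (_ *+ _); have := ltn_ord a; lia.
    by rewrite mulr2n addrAC addrA.
  rewrite !zvecCD !addrA.
  exact: (shifts_weight_iter _ (shifts_weight_rhoA _)
    (shifts_weight_iter _ (shifts_weight_rhoA _)
      (shifts_weight_iter _ (shifts_weight_rhoD u_perp) wz))).
apply: (lin_indep_rhoA_ladder (r := r)) => //.
- by rewrite subrK.
- by move=> a b v w; rewrite /P !(linear_iter _ (rhoA_linear _)).
- by move=> a x y /(iter_injective inj_sr) /(iter_injective inj_s).
- move=> a y; rewrite /P (iter_commute _ _ (rhoA_comm s r)).
  by rewrite (iter_commute _ _ (rhoA_comm (s - r) r)).
Qed.

(* Here [z] is killed by [t^r] and [t^(s-r)]; with [(u'|r) = 0 != (u'|s-r)],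
   the vectors [D(u', r)^a z] stay in the kernel of [t^r] and are nonzero,
   and [t^(s(N-a)) D(u, s-r)^a D(u', r)^a z], [a <= N], share one weight. *)
Lemma nilpotent_diff_contra : ~ locally_nilpotent (rhoA (s - r)).
Proof.
move=> nil_sr.
have [lam1 [y [wy y_nz _ ry0]]] :=
  exists_weight_vector_ker (K := fun _ => True) (fun _ _ => I) nil_r wx0 x0_nz I.
have K_stable y' : rhoA r y' = 0 -> rhoA r (rhoA (s - r) y') = 0.
  by move=> ry'0; rewrite rhoA_comm ry'0 (linear_fun0 (rhoA_linear _)).
have [lam [z [wz z_nz rz0 srz0]]] :=
  exists_weight_vector_ker K_stable nil_sr wy y_nz ry0.
have [u [u_perp ur_nz]] := nonparallel_separating (nonparallel_subl nonpar).
have [u' [u'_perp u'_nz]] :=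
  nonparallel_separating (nonparallel_sym (nonparallel_subl nonpar)).
have commD'r x : rhoD u' r (rhoA r x) = rhoA r (rhoD u' r x).
  by apply/eqP; rewrite -subr_eq0 rhoDA_comm // u'_perp scale0r.
pose P a := iter (N - a) (rhoA s); pose w a := iter a (rhoD u' r) z.
apply: (dim_le_lin_indep
  (x := fun a : 'I_N.+1 => P a (iter a (rhoD u (s - r)) (w a)))
  (@dimN (lam + zvecC (s *+ N)))).
  move=> a; have -> : s *+ N = r *+ a + ((s - r) *+ a + s *+ (N - a)).
    by rewrite addrA -mulrnDl (addrC r) subrK -mulrnDr subnKC // -ltnS.
  rewrite !zvecCD !addrA.
  exact: (shifts_weight_iter _ (shifts_weight_rhoA _)
    (shifts_weight_iter _ (shifts_weight_rhoD u_perp)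
      (shifts_weight_iter _ (shifts_weight_rhoD u'_perp) wz))).
apply: (lin_indep_rhoA_ladder (r := r)) => //.
- by rewrite subrK.
- by move=> a; apply/linear_iter/rhoA_linear.
- by move=> a; apply/iter_injective.
- by move=> a y'; rewrite /P (iter_commute _ _ (rhoA_comm s r)).
- move=> a; rewrite /w -(iter_commute _ _ commD'r) rz0.
  exact: iter_linear_fun0 (rhoD_linear u' r).
have inj_r_sr : injective (rhoA (r + (s - r))) by rewrite addrC subrK.
move=> a; apply: contraNneq
  (iter_rhoA_iter_rhoD_neq0 u'_perp u'_nz inj_r_sr a srz0 z_nz).
by move=> wa0; rewrite -/(w a) wa0 (iter_linear_fun0 _ (rhoA_linear _)).
Qed.

End NonparallelContradiction.

End GModule.

Unset Implicit Arguments.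

Theorem proposition3p3 (n : nat) (hn : (3 <= n)%N) (V : lmodType C)
    (rhoD : cvec n -> zvec n -> V -> V) (rhoA : zvec n -> V -> V) :
  is_Gmodule rhoD rhoA -> is_irreducible rhoD rhoA -> is_cuspidal rhoD ->
  (forall r : zvec n, r != 0 -> injective (rhoA r)) \/
  (forall r : zvec n, r != 0 -> locally_nilpotent (rhoA r)).
Proof.
move=> G_mod irr [weight_mod [N dimN]].
have dich r := rhoA_injective_or_nilpotent G_mod r irr.
have [lam0 [x0 [wx0 x0_nz]]] := exists_weight_vector irr.1 weight_mod.
case: (classic (exists2 r0 : zvec n, r0 != 0 & locally_nilpotent (rhoA r0)))
  => [[r0 r0_nz nil_r0]|no_nil]; [right|left] => r1 r1_nz; last first.
  by case: (dich r1) => // nil_r1; case: no_nil; exists r1.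
case: (dich r1) => // inj_r1; exfalso.
have [s [r [inj_s [nil_r nonpar]]]] :=
  nonparallel_pair (ltnW hn) dich r1_nz r0_nz inj_r1 nil_r0.
case: (dich (s - r)).
  exact: (injective_diff_contra G_mod dimN wx0 x0_nz nil_r inj_s nonpar).
exact: (nilpotent_diff_contra G_mod dimN wx0 x0_nz nil_r inj_s nonpar).
Qed.
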